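(* Let $SP_t(k)$ denote the smallest $n$ such that $PPL_t(n)=k$. Then $SP_t(1)=1$, $SP_t(2)=2$, $SP_t(3)=6$, and for all $k>0$, \[SP_t(k+3)=16\,SP_t(k)-6.\]
   Context: The Thue-Morse word $t=t[1]t[2]\cdots=abbabaabbaababba\cdots$ is the fixed point starting with $a$ of the morphism $a\mapsto abba,\ b\mapsto baab$. A palindrome is a word $p=p[1]\cdots p[n]$ with $p[i]=p[n-i+1]$ for all $i$. $PPL_t(n)$ is the minimal number of nonempty palindromes whose concatenation equals the prefix of $t$ of length $n$. *)

From mathcomp Require Import all_boot.
Set Implicit Arguments. Unset Strict Implicit. Unset Printing Implicit Defensive.

(* Letters: a = false, b = true. *)
Definition tm_morph (c : bool) : seq bool :=
  if c then [:: true; false; false; true] else [:: false; true; true; false].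

Definition tm_phi (w : seq bool) : seq bool := flatten (map tm_morph w).

(* iter n tm_phi [:: a] is a prefix of length 4^n >= n of the fixed point t
   starting with a; its first n letters are the prefix of t of length n. *)
Definition tprefix (n : nat) : seq bool := take n (iter n tm_phi [:: false]).

Definition palindrome (p : seq bool) : bool := p == rev p.

Definition pal_factorization (k : nat) (w : seq bool) : Prop :=
  exists s : seq (seq bool),
    [/\ size s = k, all (fun p => (p != [::]) && palindrome p) s & flatten s = w].

Definition PPL_t (n k : nat) : Prop :=
  pal_factorization k (tprefix n) /\
  forall j, pal_factorization j (tprefix n) -> k <= j.

Definition SP_t (k n : nat) : Prop :=
  PPL_t n k /\ forall m, PPL_t m k -> n <= m.

From mathcomp Require Import all_boot zify.
Set Implicit Arguments. Unset Strict Implicit. Unset Printing Implicit Defensive.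

(* Since t is the fixed point of phi, its letters at positions 4x+1..4x+4
   form phi(t[x+1]), and this rigidity governs the palindromes of t: an odd
   one has length 1 or 3 (t has no palindrome of length 5), and an even one
   is centred either at 4m + 2, with half-length at most 6, or at 4m, where
   it is, up to trimming, the image under phi of a palindrome centred at m.
   By induction on the length, every palindrome t[i+1..j] then satisfies
   ppl(j) <= ppl(i) + 1 for the function
     ppl(4x) = ppl(x),  ppl(4x+1) = ppl(x) + 1,
     ppl(4x+2) = min(ppl(x), ppl(x+1)) + 2,  ppl(4x+3) = ppl(x+1) + 1,
   so PPL_t >= ppl.  Conversely, applying phi to an optimal factorization of
   the prefix of length x or x + 1 and adjusting at most two letters shows
   PPL_t <= ppl.  Unfolding the recursion twice at 16n - 6 = 4(4(n-1)+2)+2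
   gives SP_t(k+3) = 16 SP_t(k) - 6. *)

Fixpoint tm_fuel (fuel n : nat) : bool :=
  if fuel is fuel'.+1 then odd n (+) tm_fuel fuel' n./2 else false.

(* [tm n] is the letter t[n+1] of the paper, with a = false: the parity of the
   binary digit sum of n. *)
Definition tm (n : nat) : bool := tm_fuel n n.

Lemma tm_fuel0 fuel : tm_fuel fuel 0 = false.
Proof. by elim: fuel. Qed.

Lemma tm_fuel_stable fuel1 fuel2 n :
  n <= fuel1 -> n <= fuel2 -> tm_fuel fuel1 n = tm_fuel fuel2 n.
Proof.
elim: fuel1 fuel2 n => [|f1 IH] [|f2] n //= le1 le2.
- by move: le1; rewrite leqn0 => /eqP ->; rewrite /= tm_fuel0.
- by move: le2; rewrite leqn0 => /eqP ->; rewrite /= tm_fuel0.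
- by rewrite (IH f2) //; lia.
Qed.

Lemma tm_rec n : tm n = odd n (+) tm n./2.
Proof.
case: n => [//|n]; rewrite /tm /=; congr (_ (+) _); apply: tm_fuel_stable; lia.
Qed.

Lemma tm_mul2 q : tm (2 * q) = tm q.
Proof. by rewrite tm_rec mul2n odd_double doubleK. Qed.

Lemma tm_mul2_add1 q : tm (2 * q + 1) = ~~ tm q.
Proof. by rewrite tm_rec mul2n addn1 /= odd_double uphalf_double. Qed.

Lemma tm_mul4 q : tm (4 * q) = tm q.
Proof. by rewrite (_ : 4 * q = 2 * (2 * q)) ?tm_mul2 //; lia. Qed.

Lemma tm_mul4_add1 q : tm (4 * q + 1) = ~~ tm q.
Proof. by rewrite (_ : 4 * q + 1 = 2 * (2 * q) + 1) ?tm_mul2_add1 ?tm_mul2 //; lia. Qed.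

Lemma tm_mul4_add2 q : tm (4 * q + 2) = ~~ tm q.
Proof. by rewrite (_ : 4 * q + 2 = 2 * (2 * q + 1)) ?tm_mul2 ?tm_mul2_add1 //; lia. Qed.

Lemma tm_mul4_add3 q : tm (4 * q + 3) = tm q.
Proof.
by rewrite (_ : 4 * q + 3 = 2 * (2 * q + 1) + 1) ?tm_mul2_add1 ?tm_mul2_add1 ?negbK //; lia.
Qed.

Lemma tm_succ_eq_odd x : tm x = tm (x + 1) -> odd x.
Proof.
have [q [->|->]] : exists q, x = 2 * q \/ x = 2 * q + 1 by exists x./2; lia.
- by rewrite tm_mul2 tm_mul2_add1; case: (tm q).
- by move=> _; lia.
Qed.

Lemma tm_cube_free x : tm x = tm (x + 1) -> tm (x + 1) = tm (x + 2) -> False.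
Proof.
move=> /tm_succ_eq_odd odd_x; rewrite (_ : x + 2 = x + 1 + 1); last lia.
by move=> /tm_succ_eq_odd; lia.
Qed.

(* [tm_pal i j]: t[i+1..j] is a palindrome. *)
Definition tm_pal (i j : nat) : Prop :=
  forall x y, i <= x -> x < j -> x + y + 1 = i + j -> tm x = tm y.

Lemma tm_pal_shrink i j i' j' : tm_pal i j -> i <= i' -> i' + j' = i + j -> tm_pal i' j'.
Proof. by move=> pal_ij le_ii' eq_ij x y *; apply: pal_ij; lia. Qed.

Lemma tm_pal_letter i : tm_pal i (i + 1).
Proof. by move=> x y *; rewrite (_ : x = i) 1?(_ : y = i) //; lia. Qed.

Lemma tm_pal5_free x : ~ tm_pal x (x + 5).
Proof.
move=> pal5; have e04 : tm x = tm (x + 4) by apply: pal5; lia.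
have e13 : tm (x + 1) = tm (x + 3) by apply: pal5; lia.
have [q [eq_x|eq_x]] : exists q, x = 2 * q \/ x = 2 * q + 1 by exists x./2; lia.
- move: e04 e13; rewrite eq_x (_ : 2 * q + 4 = 2 * (q + 2)) 1?(_ : 2 * q + 3 = 2 * (q + 1) + 1);
    try lia.
  rewrite !tm_mul2 !tm_mul2_add1 => e02 /negb_inj e01.
  by apply: (@tm_cube_free q); rewrite -e01 // -e02.
- move: e04 e13; rewrite eq_x (_ : 2 * q + 1 + 4 = 2 * (q + 2) + 1)
    1?(_ : 2 * q + 1 + 1 = 2 * (q + 1)) 1?(_ : 2 * q + 1 + 3 = 2 * (q + 2)); try lia.
  rewrite !tm_mul2 !tm_mul2_add1 => /negb_inj e02 e12.
  by apply: (@tm_cube_free q); rewrite // e02 e12.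
Qed.

Lemma tm_pal_mul4 i j : tm_pal i j -> tm_pal (4 * i) (4 * j).
Proof.
move=> pal_ij x y le_x lt_x eq_xy.
have [a [r [lt_r4 eq_x]]] : exists a r, r < 4 /\ x = 4 * a + r.
  by exists (x %/ 4), (x %% 4); lia.
have pal_a : tm a = tm (i + j - 1 - a) by apply: pal_ij; lia.
rewrite eq_x; case: r lt_r4 eq_x => [|[|[|[|r]]]] // _ eq_x.
- by rewrite (_ : y = 4 * (i + j - 1 - a) + 3) ?addn0 ?tm_mul4 ?tm_mul4_add3 //; lia.
- by rewrite (_ : y = 4 * (i + j - 1 - a) + 2) ?tm_mul4_add1 ?tm_mul4_add2 ?pal_a //; lia.
- by rewrite (_ : y = 4 * (i + j - 1 - a) + 1) ?tm_mul4_add1 ?tm_mul4_add2 ?pal_a //; lia.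
- by rewrite (_ : y = 4 * (i + j - 1 - a)) ?tm_mul4 ?tm_mul4_add3 //; lia.
Qed.

(* The letters tm (4x + 3) and tm (4y) repeat tm x and tm y: read the
   palindrome through the former on the left half of t[a+1..b] and through
   the latter on the right half. *)
Lemma tm_pal_desubst i j a b :
  tm_pal i j -> i + j = 4 * (a + b) -> i <= 4 * a + 3 -> tm_pal a b.
Proof.
move=> pal_ij eq_ij le_i.
have left_half x y : a <= x -> x < y -> x + y + 1 = a + b -> tm x = tm y.
  move=> le_x lt_xy eq_xy.
  by rewrite -(tm_mul4_add3 x) -(tm_mul4 y); apply: pal_ij; lia.
move=> x y le_x lt_x eq_xy.
case: (ltngtP x y) => [lt_xy|lt_yx|-> //]; first exact: left_half.
by symmetry; apply: left_half; lia.
Qed.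

Fixpoint ppl_fuel (fuel n : nat) : nat :=
  if fuel is fuel'.+1 then
    match n %% 4 with
    | 0 => ppl_fuel fuel' (n %/ 4)
    | 1 => ppl_fuel fuel' (n %/ 4) + 1
    | 2 => minn (ppl_fuel fuel' (n %/ 4)) (ppl_fuel fuel' (n %/ 4 + 1)) + 2
    | _ => ppl_fuel fuel' (n %/ 4 + 1) + 1
    end
  else 0.

Definition ppl (n : nat) : nat := ppl_fuel n n.

Lemma ppl_fuel0 fuel : ppl_fuel fuel 0 = 0.
Proof. by elim: fuel. Qed.

Lemma ppl_fuel_stable fuel1 fuel2 n :
  n <= fuel1 -> n <= fuel2 -> ppl_fuel fuel1 n = ppl_fuel fuel2 n.
Proof.
elim: fuel1 fuel2 n => [|f1 IH] [|f2] n // le1 le2.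
- by move: le1; rewrite leqn0 => /eqP ->; rewrite !ppl_fuel0.
- by move: le2; rewrite leqn0 => /eqP ->; rewrite !ppl_fuel0.
rewrite /=; case E: (n %% 4) => [|[|[|r]]].
- by apply: IH; lia.
- by congr (_ + _); apply: IH; lia.
- by congr (minn _ _ + _); apply: IH; lia.
- by congr (_ + _); apply: IH; lia.
Qed.

Lemma ppl_rec n :
  ppl n = match n %% 4 with
          | 0 => ppl (n %/ 4)
          | 1 => ppl (n %/ 4) + 1
          | 2 => minn (ppl (n %/ 4)) (ppl (n %/ 4 + 1)) + 2
          | _ => ppl (n %/ 4 + 1) + 1
          end.
Proof.
case: n => [//|n]; rewrite /ppl /=.
case E: (n.+1 %% 4) => [|[|[|r]]].
- by apply: ppl_fuel_stable; lia.
- by congr (_ + _); apply: ppl_fuel_stable; lia.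
- by congr (minn _ _ + _); apply: ppl_fuel_stable; lia.
- by congr (_ + _); apply: ppl_fuel_stable; lia.
Qed.

Lemma ppl0 : ppl 0 = 0.
Proof. by []. Qed.

Lemma ppl_mul4 x : ppl (4 * x) = ppl x.
Proof.
rewrite ppl_rec.
have -> : 4 * x %% 4 = 0 by lia.
by have -> : 4 * x %/ 4 = x by lia.
Qed.

Lemma ppl_mul4_add1 x : ppl (4 * x + 1) = ppl x + 1.
Proof.
rewrite ppl_rec.
have -> : (4 * x + 1) %% 4 = 1 by lia.
by have -> : (4 * x + 1) %/ 4 = x by lia.
Qed.

(* The successor [y] of [x] is a parameter, so that callers can give it the
   syntactic form that [lia] has to match against other occurrences. *)
Lemma ppl_mul4_add2 x y : y = x + 1 -> ppl (4 * x + 2) = minn (ppl x) (ppl y) + 2.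
Proof.
move=> ->; rewrite ppl_rec.
have -> : (4 * x + 2) %% 4 = 2 by lia.
by have -> : (4 * x + 2) %/ 4 = x by lia.
Qed.

Lemma ppl_mul4_add3 x y : y = x + 1 -> ppl (4 * x + 3) = ppl y + 1.
Proof.
move=> ->; rewrite ppl_rec.
have -> : (4 * x + 3) %% 4 = 3 by lia.
by have -> : (4 * x + 3) %/ 4 = x by lia.
Qed.

Lemma ppl_succ_le n : ppl (n + 1) <= ppl n + 1.
Proof.
elim/ltn_ind: n => n IH.
have [q [r [lt_r4 eq_n]]] : exists q r, r < 4 /\ n = 4 * q + r.
  by exists (n %/ 4), (n %% 4); lia.
have -> : n + 1 = 4 * q + r.+1 by lia.
rewrite eq_n; case: r lt_r4 eq_n => [|[|[|[|r]]]] // _ eq_n.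
- by rewrite addn0 ppl_mul4 ppl_mul4_add1.
- by rewrite (ppl_mul4_add2 (erefl (q + 1))) ppl_mul4_add1; lia.
- rewrite (ppl_mul4_add2 (erefl (q + 1))) (ppl_mul4_add3 (erefl (q + 1))).
  have lip_q : ppl (q + 1) <= ppl q + 1 by apply: IH; lia.
  lia.
- have -> : 4 * q + 4 = 4 * (q + 1) by lia.
  by rewrite ppl_mul4 (ppl_mul4_add3 (erefl (q + 1))); lia.
Qed.

Lemma ppl_pal3 x : tm_pal x (x + 3) -> ppl (x + 3) <= ppl x + 1.
Proof.
move=> pal3; have e02 : tm x = tm (x + 2) by apply: pal3; lia.
have [a [r [lt_r4 eq_x]]] : exists a r, r < 4 /\ x = 4 * a + r.
  by exists (x %/ 4), (x %% 4); lia.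
rewrite eq_x; case: r lt_r4 eq_x e02 => [|[|[|[|r]]]] // _ -> e02.
- by move: e02; rewrite addn0 tm_mul4 tm_mul4_add2; case: (tm a).
- by move: e02; rewrite -addnA tm_mul4_add1 tm_mul4_add3; case: (tm a).
- have -> : 4 * a + 2 + 3 = 4 * (a + 1) + 1 by lia.
  rewrite ppl_mul4_add1 (ppl_mul4_add2 (erefl (a + 1))).
  by have := ppl_succ_le a; lia.
- have -> : 4 * a + 3 + 3 = 4 * (a + 1) + 2 by lia.
  by rewrite (ppl_mul4_add2 (erefl (a + 1 + 1))) (ppl_mul4_add3 (erefl (a + 1))); lia.
Qed.

Lemma ppl_pal_odd i j : tm_pal i j -> i <= j -> odd (i + j) -> ppl j <= ppl i + 1.
Proof.
move=> pal_ij le_ij odd_ij.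
have [c eq_c] : exists c, i + j = 2 * c + 1 by exists (i + j)./2; lia.
have [eq_j|[eq_j|long]] : j = i + 1 \/ j = i + 3 \/ i + 5 <= j by lia.
- by rewrite eq_j ppl_succ_le.
- by rewrite eq_j; apply: ppl_pal3; rewrite -eq_j.
- exfalso; apply: (@tm_pal5_free (c - 2)).
  by apply: tm_pal_shrink pal_ij _ _; lia.
Qed.

Lemma ppl_pal_center2 i j m :
  tm_pal i j -> i <= j -> i + j = 8 * m + 4 -> ppl j <= ppl i + 1.
Proof.
move=> pal_ij le_ij eq_ij.
have [h eq_j] : exists h, j = 4 * m + 2 + h by exists (j - (4 * m + 2)); lia.
have [h_ge7|h_lt7] := leqP 7 h.
  exfalso; apply: (@tm_pal5_free (m - 2)).
  by apply: tm_pal_desubst pal_ij _ _; lia.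
have lip_m := ppl_succ_le m.
have [h_le2|h_gt2] := leqP h 2.
  case: h h_le2 h_lt7 eq_j => [|[|[|h]]] // _ _ eq_j.
  - by rewrite (_ : i = j); lia.
  - have -> : j = 4 * m + 3 by lia.
    have -> : i = 4 * m + 1 by lia.
    by rewrite (ppl_mul4_add3 (erefl (m + 1))) ppl_mul4_add1; lia.
  - have -> : j = 4 * (m + 1) by lia.
    have -> : i = 4 * m by lia.
    by rewrite !ppl_mul4.
have pal_m : ppl (m + 2) <= ppl (m - 1) + 1.
  have -> : m + 2 = m - 1 + 3 by lia.
  by apply: ppl_pal3; apply: tm_pal_desubst pal_ij _ _; lia.
case: h h_gt2 h_lt7 eq_j => [|[|[|[|[|[|[|h]]]]]]] // _ _ eq_j.
- have -> : j = 4 * (m + 1) + 1 by lia.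
  have -> : i = 4 * (m - 1) + 3 by lia.
  by rewrite ppl_mul4_add1 (@ppl_mul4_add3 (m - 1) m); lia.
- have -> : j = 4 * (m + 1) + 2 by lia.
  have -> : i = 4 * (m - 1) + 2 by lia.
  by rewrite (@ppl_mul4_add2 (m + 1) (m + 2)) ?(@ppl_mul4_add2 (m - 1) m); lia.
- have -> : j = 4 * (m + 1) + 3 by lia.
  have -> : i = 4 * (m - 1) + 1 by lia.
  by rewrite (@ppl_mul4_add3 (m + 1) (m + 2)) ?ppl_mul4_add1; lia.
- have -> : j = 4 * (m + 2) by lia.
  have -> : i = 4 * (m - 1) by lia.
  by rewrite !ppl_mul4.
Qed.

Lemma ppl_pal_center0 i j m :
  (forall a b, a <= b -> b < j -> tm_pal a b -> ppl b <= ppl a + 1) ->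
  tm_pal i j -> i < j -> i + j = 8 * m -> ppl j <= ppl i + 1.
Proof.
move=> IH pal_ij lt_ij eq_ij.
have desubst a b : a <= b -> a + b = 2 * m -> i <= 4 * a + 3 -> ppl b <= ppl a + 1.
  by move=> *; apply: IH; [lia | lia | apply: tm_pal_desubst pal_ij _ _; lia].
have [e [r [lt_r4 eq_j]]] : exists e r, r < 4 /\ j = 4 * (m + e) + r.
  by exists ((j - 4 * m) %/ 4), ((j - 4 * m) %% 4); lia.
rewrite eq_j; case: r lt_r4 eq_j => [|[|[|[|r]]]] // _ eq_j.
- have -> : i = 4 * (m - e) by lia.
  by rewrite addn0 !ppl_mul4; apply: desubst; lia.
- have -> : i = 4 * (m - e - 1) + 3 by lia.
  rewrite ppl_mul4_add1 (@ppl_mul4_add3 _ (m - e)); last lia.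
  by have := desubst (m - e) (m + e); lia.
- have -> : i = 4 * (m - e - 1) + 2 by lia.
  rewrite (@ppl_mul4_add2 _ (m + e + 1)) ?(@ppl_mul4_add2 _ (m - e)); try lia.
  by have := desubst (m - e) (m + e); have := desubst (m - e - 1) (m + e + 1); lia.
- have -> : i = 4 * (m - e - 1) + 1 by lia.
  rewrite (@ppl_mul4_add3 _ (m + e + 1)) ?ppl_mul4_add1; last lia.
  by have := desubst (m - e - 1) (m + e + 1); lia.
Qed.

Lemma ppl_pal_le i j : tm_pal i j -> i <= j -> ppl j <= ppl i + 1.
Proof.
elim/ltn_ind: j i => j IH i pal_ij le_ij.
have [eq_ij|lt_ij] : i = j \/ i < j by lia.
  by rewrite eq_ij leq_addr.
have [odd_ij|even_ij] := boolP (odd (i + j)); first exact: ppl_pal_odd.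
have [c eq_c] : exists c, i + j = 2 * c by exists (i + j)./2; lia.
(* The two middle letters are equal, so the centre c is even. *)
have odd_c : odd (c - 1) by apply: tm_succ_eq_odd; apply: pal_ij; lia.
have [m [center0|center2]] : exists m, i + j = 8 * m \/ i + j = 8 * m + 4.
  by exists ((i + j) %/ 8); lia.
- by apply: ppl_pal_center0 pal_ij lt_ij center0 => a b *; apply: IH.
- exact: ppl_pal_center2 pal_ij le_ij center2.
Qed.

Inductive tm_palfact (i : nat) : nat -> nat -> Prop :=
| tm_palfact0 : tm_palfact i 0 i
| tm_palfactS k j l : tm_palfact i k j -> j < l -> tm_pal j l -> tm_palfact i k.+1 l.

Lemma tm_palfact_ppl_le k n : tm_palfact 0 k n -> ppl n <= k.
Proof.
elim=> [//|k' i j _ IH lt_ij pal_ij].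
by have := ppl_pal_le pal_ij (ltnW lt_ij); lia.
Qed.

Lemma tm_palfact_cons i0 i1 k j :
  tm_pal i0 i1 -> i0 < i1 -> tm_palfact i1 k j -> tm_palfact i0 k.+1 j.
Proof.
move=> pal01 lt01; elim=> [|k' i j' _ IH lt_ij pal_ij].
- exact: tm_palfactS (tm_palfact0 i0) lt01 pal01.
- exact: tm_palfactS IH lt_ij pal_ij.
Qed.

Lemma tm_palfact_last i0 k n : tm_palfact i0 k n -> i0 < n ->
  exists k' i, [/\ k = k'.+1, tm_palfact i0 k' i, i < n & tm_pal i n].
Proof. by case=> [|k' i j *]; [rewrite ltnn | exists k', i]. Qed.

Lemma tm_palfact_mul4 k n : tm_palfact 0 k n -> tm_palfact 0 k (4 * n).
Proof.
elim=> [|k' i j _ IH lt_ij pal_ij]; first exact: tm_palfact0.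
by apply: tm_palfactS IH _ (tm_pal_mul4 pal_ij); lia.
Qed.

Lemma tm_palfact_letters i k n d : tm_palfact i k n -> tm_palfact i (k + d) (n + d).
Proof.
move=> fact_n; elim: d => [|d IH]; first by rewrite !addn0.
rewrite !addnS; apply: tm_palfactS IH _ _ => //.
by rewrite -addn1; apply: tm_pal_letter.
Qed.

(* Apply phi to a factorization of t[1..j] ending with the palindrome
   t[i+1..j], then split the image t[4i+1..4j] of that palindrome into d
   letters and the palindrome t[4i+d+1..4j-d]. *)
Lemma tm_palfact_mul4_trim k i j d : tm_palfact 0 k i -> tm_pal i j ->
  2 * d < 4 * (j - i) -> tm_palfact 0 (k + d).+1 (4 * j - d).
Proof.
move=> fact_i pal_ij lt_d.
apply: tm_palfactS (tm_palfact_letters d (tm_palfact_mul4 fact_i)) _ _; first lia.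
by apply: tm_pal_shrink (tm_pal_mul4 pal_ij) _ _; lia.
Qed.

Lemma tm_palfact_ppl n : tm_palfact 0 (ppl n) n.
Proof.
elim/ltn_ind: n => n IH.
have [->|n_gt0] := posnP n; first exact: tm_palfact0.
have [q [r [lt_r4 eq_n]]] : exists q r, r < 4 /\ n = 4 * q + r.
  by exists (n %/ 4), (n %% 4); lia.
have fact_q : tm_palfact 0 (ppl q) q by apply: IH; lia.
have last_q1 : 4 * q + 2 <= n -> exists k i,
    [/\ ppl (q + 1) = k.+1, tm_palfact 0 k i, i < q + 1 & tm_pal i (q + 1)].
  by move=> le_n; apply: tm_palfact_last; [apply: IH | ]; lia.
rewrite eq_n; case: r lt_r4 eq_n => [|[|[|[|r]]]] // _ eq_n.
- by rewrite addn0 ppl_mul4; apply: tm_palfact_mul4.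
- by rewrite ppl_mul4_add1; apply: tm_palfact_letters; apply: tm_palfact_mul4.
- have /last_q1 [k [i [ppl_q1 fact_i lt_i pal_i]]] : 4 * q + 2 <= n by lia.
  rewrite (ppl_mul4_add2 (erefl (q + 1))).
  have [le_q|lt_q1] := leqP (ppl q) (ppl (q + 1)).
    by apply: tm_palfact_letters; apply: tm_palfact_mul4.
  have lt_iq : i < q.
    have := tm_palfact_ppl_le fact_i.
    by case: (ltngtP i q) => [// | gt_iq | ->]; lia.
  rewrite ppl_q1 (_ : 4 * q + 2 = 4 * (q + 1) - 2); last lia.
  by rewrite (_ : k.+1 + 2 = (k + 2).+1); [apply: tm_palfact_mul4_trim fact_i pal_i _; lia | lia].
- have /last_q1 [k [i [ppl_q1 fact_i lt_i pal_i]]] : 4 * q + 2 <= n by lia.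
  rewrite (ppl_mul4_add3 (erefl (q + 1))) ppl_q1 (_ : 4 * q + 3 = 4 * (q + 1) - 1); last lia.
  by rewrite (_ : k.+1 + 1 = (k + 1).+1); [apply: tm_palfact_mul4_trim fact_i pal_i _; lia | lia].
Qed.

Definition tm_word (i l : nat) : seq bool := map tm (iota i l).

Lemma size_tm_word i l : size (tm_word i l) = l.
Proof. by rewrite size_map size_iota. Qed.

Lemma tm_wordD i a b : tm_word i (a + b) = tm_word i a ++ tm_word (i + a) b.
Proof. by rewrite /tm_word iotaD map_cat. Qed.

Lemma palindrome_tm_word i l : palindrome (tm_word i l) <-> tm_pal i (i + l).
Proof.
rewrite /palindrome /tm_word; split.
- move=> /eqP pal_w x y le_x lt_x eq_xy.
  have := congr1 (nth false ^~ (x - i)) pal_w.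
  rewrite nth_rev size_map size_iota; last lia.
  rewrite !(nth_map 0) ?size_iota ?nth_iota; try lia.
  by rewrite (_ : i + (x - i) = x) 1?(_ : i + (l - (x - i).+1) = y) //; lia.
- move=> pal_il; apply/eqP/(@eq_from_nth _ false); first by rewrite size_rev.
  move=> d; rewrite size_map size_iota => lt_d.
  rewrite nth_rev size_map size_iota // !(nth_map 0) ?size_iota ?nth_iota; try lia.
  by apply: pal_il; lia.
Qed.

Lemma tm_phi_cat u v : tm_phi (u ++ v) = tm_phi u ++ tm_phi v.
Proof. by rewrite /tm_phi map_cat flatten_cat. Qed.

Lemma tm_phi_tm_word m : tm_phi (tm_word 0 m) = tm_word 0 (4 * m).
Proof.
elim: m => [//|m IH].
rewrite -addn1 tm_wordD tm_phi_cat IH (_ : 4 * (m + 1) = 4 * m + 4); last lia.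
rewrite tm_wordD; congr (_ ++ _).
rewrite /tm_phi /tm_word /= cats0 !add0n -(addn3 (4 * m)) -(addn2 (4 * m)) -(addn1 (4 * m)).
by rewrite tm_mul4 tm_mul4_add1 tm_mul4_add2 tm_mul4_add3; case: (tm m).
Qed.

Lemma iter_tm_phi n : iter n tm_phi [:: false] = tm_word 0 (4 ^ n).
Proof. by elim: n => [//|n IH]; rewrite iterS IH tm_phi_tm_word expnS. Qed.

Lemma tprefixE n : tprefix n = tm_word 0 n.
Proof.
rewrite /tprefix iter_tm_phi (_ : 4 ^ n = n + (4 ^ n - n)).
  by rewrite tm_wordD take_size_cat // size_tm_word.
by rewrite subnKC // ltnW // ltn_expl.
Qed.

Definition nonempty_pal (p : seq bool) : bool := (p != [::]) && palindrome p.

Lemma tm_palfact_of_flatten s i l :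
  all nonempty_pal s -> flatten s = tm_word i l -> tm_palfact i (size s) (i + l).
Proof.
elim: s i l => [|p s IH] i l /=.
  by move=> _ /(congr1 size); rewrite size_tm_word /= => <-; rewrite addn0; apply: tm_palfact0.
case/andP=> /andP [p_nil p_pal] s_pal eq_flat.
have eq_l : size p + size (flatten s) = l by rewrite -size_cat eq_flat size_tm_word.
move: eq_flat; rewrite -eq_l tm_wordD => /eqP; rewrite eqseq_cat ?size_tm_word //.
case/andP=> /eqP eq_p /eqP /(IH _ _ s_pal); rewrite -addnA => fact_s.
apply: tm_palfact_cons fact_s; first by apply/palindrome_tm_word; rewrite -eq_p.
have : size p != 0 by rewrite size_eq0.
lia.
Qed.

Lemma flatten_of_tm_palfact i0 k j : tm_palfact i0 k j -> i0 <= j /\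
  exists s, [/\ size s = k, all nonempty_pal s & flatten s = tm_word i0 (j - i0)].
Proof.
elim=> [|k' i j' _ [le_i0 [s [size_s s_pal flat_s]]] lt_ij pal_ij].
  by split=> //; exists [::]; rewrite subnn.
split; first lia.
exists (rcons s (tm_word i (j' - i))); split; first by rewrite size_rcons size_s.
- rewrite all_rcons s_pal andbT /nonempty_pal -size_eq0 size_tm_word.
  apply/andP; split; first lia.
  by apply/palindrome_tm_word; rewrite subnKC // ltnW.
- rewrite -cats1 flatten_cat /= cats0 flat_s (_ : j' - i0 = (i - i0) + (j' - i)); last lia.
  by rewrite tm_wordD subnKC.
Qed.

Lemma pal_factorizationE k n : pal_factorization k (tprefix n) <-> tm_palfact 0 k n.
Proof.
rewrite tprefixE; split.
- by case=> s [<- s_pal flat_s]; apply: tm_palfact_of_flatten s_pal flat_s.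
- by case/flatten_of_tm_palfact=> _ [s [size_s s_pal]]; rewrite subn0 => flat_s; exists s.
Qed.

Lemma PPL_tE n k : PPL_t n k <-> ppl n = k.
Proof.
split.
- case=> /pal_factorizationE /tm_palfact_ppl_le le_k min_k.
  by have := min_k _ (proj2 (pal_factorizationE _ _) (tm_palfact_ppl n)); lia.
- move=> <-; split; first exact/pal_factorizationE/tm_palfact_ppl.
  by move=> j /pal_factorizationE /tm_palfact_ppl_le.
Qed.

Lemma SP_tE k n : SP_t k n <-> ppl n = k /\ forall m, ppl m = k -> n <= m.
Proof.
rewrite /SP_t PPL_tE.
by split=> [] [ppl_n min_n]; split=> // m /PPL_tE; apply: min_n.
Qed.

Lemma ppl_attains k m : k <= ppl m -> exists2 m', m' <= m & ppl m' = k.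
Proof.
elim: m => [|m IH]; first by rewrite ppl0 leqn0 => /eqP ->; exists 0.
have [le_k _|lt_k le_k] := leqP k (ppl m).
  by have [m' le_m' ppl_m'] := IH le_k; exists m'; first exact: leqW.
by exists m.+1 => //; have := ppl_succ_le m; rewrite addn1; lia.
Qed.

Lemma ppl_lt_first k n m : (forall m', ppl m' = k -> n <= m') -> m < n -> ppl m < k.
Proof.
move=> first_n lt_mn; rewrite ltnNge; apply/negP => /ppl_attains [m' le_m' /first_n].
lia.
Qed.

Lemma SP_t_of_search k n : ppl n = k -> all (fun m => ppl m != k) (iota 0 n) -> SP_t k n.
Proof.
move=> ppl_n /allP none_before; apply/SP_tE; split=> // m ppl_m.
rewrite leqNgt; apply/negP => lt_mn.
by move: (none_before m); rewrite mem_iota add0n lt_mn ppl_m eqxx => /(_ isT).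
Qed.

Lemma ppl_mul4_add_pair x r : r < 4 ->
  [\/ [/\ r = 0, ppl (4 * x + r) = ppl x & ppl (4 * x + r + 1) = ppl x + 1],
      [/\ r = 1, ppl (4 * x + r) = ppl x + 1
               & ppl (4 * x + r + 1) = minn (ppl x) (ppl (x + 1)) + 2],
      [/\ r = 2, ppl (4 * x + r) = minn (ppl x) (ppl (x + 1)) + 2
               & ppl (4 * x + r + 1) = ppl (x + 1) + 1] |
      [/\ r = 3, ppl (4 * x + r) = ppl (x + 1) + 1 & ppl (4 * x + r + 1) = ppl (x + 1)]].
Proof.
case: r => [|[|[|[|r]]]] // _; rewrite -addnA.
- by apply: Or41; rewrite addn0 ppl_mul4 ppl_mul4_add1.
- by apply: Or42; rewrite ppl_mul4_add1 (ppl_mul4_add2 (erefl (x + 1))).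
- by apply: Or43; rewrite (ppl_mul4_add2 (erefl (x + 1))) (ppl_mul4_add3 (erefl (x + 1))).
- apply: Or44; rewrite (ppl_mul4_add3 (erefl (x + 1))).
  by rewrite (_ : 4 * x + (3 + 1) = 4 * (x + 1)) ?ppl_mul4 //; lia.
Qed.

Lemma mul16_add_split x s : s < 16 -> exists r1 r0,
  [/\ r1 < 4, r0 < 4 & 16 * x + s = 4 * (4 * x + r1) + r0].
Proof. by move=> lt_s; exists (s %/ 4), (s %% 4); split; lia. Qed.

Lemma ppl_mul16_le_max x s : s < 16 -> ppl (16 * x + s) <= maxn (ppl x) (ppl (x + 1)) + 3.
Proof.
case/(mul16_add_split x) => r1 [r0 [lt_r1 lt_r0 ->]].
by case: (ppl_mul4_add_pair (4 * x + r1) lt_r0) (ppl_mul4_add_pair x lt_r1)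
  => [] [? ? ?] [] [? ? ?]; lia.
Qed.

Lemma ppl_mul16_le x s : s < 10 -> ppl (16 * x + s) <= ppl x + 3.
Proof.
move=> lt_s; have /(mul16_add_split x) [r1 [r0 [lt_r1 lt_r0 eq_s]]] : s < 16 by lia.
rewrite eq_s; have := ppl_succ_le x.
by case: (ppl_mul4_add_pair (4 * x + r1) lt_r0) (ppl_mul4_add_pair x lt_r1)
  => [] [? ? ?] [] [? ? ?]; lia.
Qed.

Lemma ppl_mul16_add10 x y :
  y = x + 1 -> ppl (16 * x + 10) = minn (minn (ppl x) (ppl y) + 2) (ppl y + 1) + 2.
Proof.
move=> eq_y; rewrite (_ : 16 * x + 10 = 4 * (4 * x + 2) + 2); last lia.
rewrite (@ppl_mul4_add2 _ (4 * x + 3)); last lia.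
by rewrite (ppl_mul4_add2 eq_y) (ppl_mul4_add3 eq_y).
Qed.

Lemma ppl_first_add3 k n : 0 < k -> ppl n = k -> (forall m, ppl m = k -> n <= m) ->
  ppl (16 * n - 6) = k + 3 /\ forall m, ppl m = k + 3 -> 16 * n - 6 <= m.
Proof.
move=> k_gt0 ppl_n first_n.
have below m : m < n -> ppl m < k by apply: ppl_lt_first.
have n_gt0 : 0 < n by rewrite lt0n; apply: contraTneq k_gt0 => n0; rewrite -ppl_n n0.
have ppl_pred : ppl (n - 1) = k - 1.
  have lt_pred : ppl (n - 1) < k by apply: below; lia.
  by have := ppl_succ_le (n - 1); rewrite subnK // ppl_n; lia.
split.
  rewrite (_ : 16 * n - 6 = 16 * (n - 1) + 10); last lia.
  by rewrite (@ppl_mul16_add10 _ n); lia.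
move=> m ppl_m; rewrite leqNgt; apply/negP => lt_m.
have [q [s [lt_s eq_m]]] : exists q s, s < 16 /\ m = 16 * q + s.
  by exists (m %/ 16), (m %% 16); lia.
have ppl_q : ppl q < k by apply: below; lia.
have [q1_lt|q1_eq] : q + 1 < n \/ q + 1 = n by lia.
- have ppl_q1 : ppl (q + 1) < k by apply: below.
  by have := ppl_mul16_le_max q lt_s; rewrite -eq_m; lia.
- have lt_s10 : s < 10 by lia.
  by have := ppl_mul16_le q lt_s10; rewrite -eq_m; lia.
Qed.

Theorem proposition14 :
  [/\ SP_t 1 1, SP_t 2 2, SP_t 3 6 &
      forall k n, 0 < k -> SP_t k n -> SP_t (k + 3) (16 * n - 6)].
Proof.
split; [by apply: SP_t_of_search; vm_compute.. |].
move=> k n k_gt0 /SP_tE [ppl_n first_n]; apply/SP_tE.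
exact: ppl_first_add3.
Qed.
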